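(* There exists a comeager set $\mathcal S\subseteq\mathcal G$ such that for every $G\in\mathcal S$ and every $H\in\mathcal G$, the groups $\overline G$ and $\overline H$ are elementarily equivalent (as structures in the first-order language of group theory) if and only if $H\in\mathcal S$.
   Context: Let $\mathbb N=\{1,2,3,\dots\}$. Equip $\mathbb N^{\mathbb N\times\mathbb N}$ with the product topology of the discrete topology on $\mathbb N$. Let $\mathcal G$ be the subspace consisting of those $A\in\mathbb N^{\mathbb N\times\mathbb N}$ that are the multiplication table of a group on the underlying set $\mathbb N$ whose identity element is $1$. For $G\in\mathcal G$, $\overline G$ denotes the group on $\mathbb N$ with multiplication table $G$. The language of group theory has a binary function symbol (multiplication) and a constant symbol $1$; two structures are elementarily equivalent if they satisfy the same first-order sentences of this language. *)

(* Encoding: the underlying set N = {1,2,3,...} is represented by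
   Rocq's nat = {0,1,2,...} via n |-> n-1 (a bijection, hence a homeomorphism of
   N^(N x N) with the product of discrete topologies); the identity element 1
   becomes 0. *)
From Stdlib Require Import List Arith.
Import ListNotations.

Definition table := nat -> nat -> nat.

Definition is_group_table (A : table) : Prop :=
  (forall x y z, A (A x y) z = A x (A y z)) /\
  (forall x, A 0 x = x /\ A x 0 = x) /\
  (forall x, exists y, A x y = 0 /\ A y x = 0).

Definition Gspace (A : table) : Prop := is_group_table A.

(** Basic neighbourhoods of the product topology: agreement on a finite square. *)
Definition agree (n : nat) (A B : table) : Prop :=
  forall i j, i < n -> j < n -> A i j = B i j.

Definition rel_open (U : table -> Prop) : Prop :=
  forall A, Gspace A -> U A ->
    exists n, forall B, Gspace B -> agree n A B -> U B.

Definition rel_closure (X : table -> Prop) (A : table) : Prop :=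
  Gspace A /\ forall n, exists B, Gspace B /\ X B /\ agree n A B.

Definition rel_nowhere_dense (X : table -> Prop) : Prop :=
  ~ exists U : table -> Prop,
      rel_open U /\ (exists A, Gspace A /\ U A) /\
      (forall A, Gspace A -> U A -> rel_closure X A).

Definition rel_meager (X : table -> Prop) : Prop :=
  exists N : nat -> (table -> Prop),
    (forall k, rel_nowhere_dense (N k)) /\
    (forall A, Gspace A -> X A -> exists k, N k A).

Definition comeager_in_G (S : table -> Prop) : Prop :=
  (forall A, S A -> Gspace A) /\ rel_meager (fun A => Gspace A /\ ~ S A).

Inductive term : Type :=
| TVar : nat -> term
| TOne : term
| TMul : term -> term -> term.

Inductive formula : Type :=
| FEq : term -> term -> formula
| FFalse : formula
| FNot : formula -> formula
| FAnd : formula -> formula -> formula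
| FOr : formula -> formula -> formula
| FImp : formula -> formula -> formula
| FAll : nat -> formula -> formula
| FEx : nat -> formula -> formula.

Fixpoint term_fv (t : term) : list nat :=
  match t with
  | TVar n => [n]
  | TOne => []
  | TMul a b => term_fv a ++ term_fv b
  end.

Fixpoint fv (f : formula) : list nat :=
  match f with
  | FEq a b => term_fv a ++ term_fv b
  | FFalse => []
  | FNot g => fv g
  | FAnd g h | FOr g h | FImp g h => fv g ++ fv h
  | FAll n g | FEx n g => filter (fun m => negb (Nat.eqb m n)) (fv g)
  end.

Definition sentence (f : formula) : Prop := fv f = [].

Definition upd (e : nat -> nat) (n v : nat) : nat -> nat :=
  fun m => if Nat.eqb m n then v else e m.

Fixpoint eval (A : table) (e : nat -> nat) (t : term) : nat :=
  match t with
  | TVar n => e n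
  | TOne => 0
  | TMul a b => A (eval A e a) (eval A e b)
  end.

Fixpoint sat (A : table) (e : nat -> nat) (f : formula) : Prop :=
  match f with
  | FEq a b => eval A e a = eval A e b
  | FFalse => False
  | FNot g => ~ sat A e g
  | FAnd g h => sat A e g /\ sat A e h
  | FOr g h => sat A e g \/ sat A e h
  | FImp g h => sat A e g -> sat A e h
  | FAll n g => forall v, sat A (upd e n v) g
  | FEx n g => exists v, sat A (upd e n v) g
  end.

Definition elem_equiv (A B : table) : Prop :=
  forall f, sentence f -> (sat A (fun _ => 0) f <-> sat B (fun _ => 0) f).

From Stdlib Require Import Arith Lia Cantor Classical IndefiniteDescription FunctionalExtensionality.

(* The basic neighbourhoods of a group table [A] are the sets [nbhd A n] of groups agreeing
   with [A] on the [n x n] square, and the space is Baire: a sequence of shrinking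
   neighbourhoods, each fixing a larger square of the table, converges to a group table.
   Every set defined by a formula has the Baire property, since atomic formulas define
   clopen sets and the Baire property survives Boolean operations and countable unions.
   Relabeling the underlying set by a bijection fixing 1 is a homeomorphism preserving
   satisfaction, and a direct product of two groups lies, up to relabeling, in a
   neighbourhood of each factor; so any two non-empty open sets are moved to overlap.
   This gives the topological zero-one law: each sentence holds on a meager or on a
   comeager set.  The groups satisfying every generically true sentence form a comeager
   set (there are countably many sentences), and all of them share one complete theory. *)

(** * Neighbourhoods and meager sets *)

Lemma agree_refl n A : agree n A A.
Proof. now intros i j _ _. Qed.

Lemma agree_sym n A B : agree n A B -> agree n B A.
Proof. intros H i j Hi Hj. symmetry. now apply H. Qed.

Lemma agree_trans n A B C : agree n A B -> agree n B C -> agree n A C.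
Proof. intros HAB HBC i j Hi Hj. rewrite HAB by assumption. now apply HBC. Qed.

Lemma agree_le m n A B : m <= n -> agree n A B -> agree m A B.
Proof. intros Hmn H i j Hi Hj. apply H; lia. Qed.

Definition nbhd (A : table) (n : nat) (C : table) : Prop := Gspace C /\ agree n A C.

Definition subset (X Y : table -> Prop) : Prop := forall C, X C -> Y C.

Lemma nbhd_center A n : Gspace A -> nbhd A n A.
Proof. split; [assumption | apply agree_refl]. Qed.

Lemma nbhd_sub A n B m : n <= m -> agree n A B -> subset (nbhd B m) (nbhd A n).
Proof.
  intros Hnm HAB C [GC HBC]. split; [assumption|].
  apply (agree_trans _ _ B); [assumption | now apply (agree_le _ m)].
Qed.

Lemma nbhd_inside_or_disjoint A n B m :
  subset (nbhd B (max m n)) (nbhd A n) \/ forall C, nbhd B (max m n) C -> ~ nbhd A n C.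
Proof.
  destruct (classic (agree n A B)) as [HAB | HAB].
  - left. apply nbhd_sub; [lia | assumption].
  - right. intros C [_ HBC] [_ HAC]. apply HAB.
    apply (agree_trans _ _ C); [assumption|].
    apply agree_sym, (agree_le _ (max m n)); [lia | assumption].
Qed.

Definition nowhere_dense (N : table -> Prop) : Prop :=
  forall A n, Gspace A -> exists B m,
    Gspace B /\ subset (nbhd B m) (nbhd A n) /\ forall C, nbhd B m C -> ~ N C.

Lemma rel_nowhere_dense_iff N : rel_nowhere_dense N <-> nowhere_dense N.
Proof.
  split.
  - intros Hnd A n GA. apply NNPP; intro Hno. apply Hnd. exists (nbhd A n). split; [|split].
    + intros C GC [_ HAC]. exists n. intros D GD HCD. split; [assumption|].
      now apply (agree_trans _ _ C).
    + exists A. split; [assumption | now apply nbhd_center].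
    + intros C GC HC. split; [assumption|]. intro m. apply NNPP; intro Hm.
      apply Hno. exists C, (max m n). split; [assumption|]. split.
      * apply (nbhd_sub _ _ _ _ (Nat.le_max_r m n)); apply HC.
      * intros D [GD HCD] ND. apply Hm. exists D. split; [assumption|]. split; [assumption|].
        apply (agree_le _ (max m n)); [lia | assumption].
  - intros Hnd [U [HU [[A [GA UA]] Hcl]]].
    destruct (HU A GA UA) as [n Hn].
    destruct (Hnd A n GA) as [B [m [GB [Hsub Havoid]]]].
    assert (UB : U B) by (apply Hn; [assumption | apply (Hsub B), nbhd_center, GB]).
    destruct (Hcl B GB UB) as [_ Hclose]. destruct (Hclose m) as [D [GD [ND HBD]]].
    now apply (Havoid D).
Qed.

Lemma meager_sub (Y Z : table -> Prop) :
  (forall A, Gspace A -> Y A -> Z A) -> rel_meager Z -> rel_meager Y.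
Proof.
  intros HYZ [N [HN Hcov]]. exists N. split; [assumption|]. intros A GA YA. now apply Hcov, HYZ.
Qed.

Lemma meager_of_nowhere_dense N : nowhere_dense N -> rel_meager N.
Proof.
  intro HN. exists (fun _ => N). split.
  - intros _. now apply rel_nowhere_dense_iff.
  - intros A _ NA. now exists 0.
Qed.

Lemma meager_empty (Y : table -> Prop) : (forall A, Gspace A -> ~ Y A) -> rel_meager Y.
Proof.
  intro HY. apply (meager_sub _ (fun _ => False)); [intros A GA YA; exact (HY A GA YA)|].
  apply meager_of_nowhere_dense. intros A n GA. exists A, n.
  split; [assumption|]. split; [now intros C|]. tauto.
Qed.

Lemma meager_bigcup (Y : nat -> table -> Prop) :
  (forall i, rel_meager (Y i)) -> rel_meager (fun A => exists i, Y i A).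
Proof.
  intro HY. destruct (functional_choice (fun i N => (forall k, rel_nowhere_dense (N k)) /\
    (forall A, Gspace A -> Y i A -> exists k, N k A)) HY) as [N HN].
  exists (fun c => N (fst (of_nat c)) (snd (of_nat c))). split.
  - intro c. apply HN.
  - intros A GA [i Yi]. destruct (proj2 (HN i) A GA Yi) as [k Hk].
    exists (to_nat (i, k)). now rewrite cancel_of_to.
Qed.

Lemma meager_bigcup_inj {I : Type} (code : I -> nat) (Y : I -> table -> Prop) :
  (forall i j, code i = code j -> i = j) ->
  (forall i, rel_meager (Y i)) -> rel_meager (fun A => exists i, Y i A).
Proof.
  intros Hinj HY.
  apply (meager_sub _ (fun A => exists c, exists i, code i = c /\ Y i A)).
  { intros A _ [i Yi]. now exists (code i), i. }
  apply meager_bigcup. intro c. destruct (classic (exists i, code i = c)) as [[i Hi] | Hc].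
  - apply (meager_sub _ (Y i)); [|apply HY].
    intros A _ [j [Hj Yj]]. rewrite <- Hi in Hj. now rewrite <- (Hinj _ _ Hj).
  - apply meager_empty. intros A _ [i [Hi _]]. eauto.
Qed.

Lemma meager_union (Y Z : table -> Prop) :
  rel_meager Y -> rel_meager Z -> rel_meager (fun A => Y A \/ Z A).
Proof.
  intros HY HZ. apply (meager_sub _ (fun A => exists b : bool, if b then Y A else Z A)).
  - intros A _ [H | H]; [exists true | exists false]; exact H.
  - apply (meager_bigcup_inj (fun b : bool => if b then 0 else 1)).
    + now intros [|] [|].
    + now intros [|].
Qed.

(** * The Baire category theorem *)

Section Baire.

Variable N : nat -> table -> Prop.

(* Fixing an inverse of [k] inside the new window is what makes the limit table a group;
   associativity and the identity pass to the limit by themselves. *)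
Definition refines (k : nat) (A : table) (n : nat) (B : table) (m : nat) : Prop :=
  Gspace B /\ n < m /\ agree n A B /\ (forall C, nbhd B m C -> ~ N k C) /\
  exists y, y < m /\ k < m /\ B k y = 0 /\ B y k = 0.

Hypothesis N_nowhere_dense : forall k, nowhere_dense (N k).

Lemma refines_exists k A n : Gspace A -> exists B m, refines k A n B m.
Proof.
  intro GA. destruct (N_nowhere_dense k A n GA) as [B [m [GB [Hsub Havoid]]]].
  assert (HAB : agree n A B) by apply (Hsub B), nbhd_center, GB.
  destruct (proj2 (proj2 GB) k) as [y [Hky Hyk]].
  exists B, (max m (S (n + k + y))). split; [assumption|]. split; [lia|]. split; [assumption|]. split.
  - intros C [GC HBC]. apply Havoid. split; [assumption|].
    apply (agree_le _ (max m (S (n + k + y)))); [lia | assumption].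
  - exists y. repeat split; [lia | lia | assumption | assumption].
Qed.

Variable next : nat -> table * nat -> table * nat.
Hypothesis next_refines :
  forall k s, Gspace (fst s) -> refines k (fst s) (snd s) (fst (next k s)) (snd (next k s)).
Variable A0 : table.
Variable n0 : nat.
Hypothesis A0_group : Gspace A0.

Fixpoint stage (j : nat) : table * nat :=
  match j with 0 => (A0, n0) | S j => next j (stage j) end.

Definition approx (j : nat) : table := fst (stage j).
Definition radius (j : nat) : nat := snd (stage j).

Lemma stage_refines j :
  Gspace (approx j) /\ refines j (approx j) (radius j) (approx (S j)) (radius (S j)).
Proof.
  induction j as [|j [_ IH]].
  - split; [assumption|]. now apply next_refines.
  - split; [apply IH|]. apply next_refines, IH.
Qed.

Lemma radius_ge j : j <= radius j.
Proof. induction j; [lia|]. pose proof (proj2 (stage_refines j)) as H. unfold refines in H. lia. Qed.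

Lemma radius_mono i j : i <= j -> radius i <= radius j.
Proof.
  induction 1 as [|j _ IH]; [lia|].
  pose proof (proj2 (stage_refines j)) as Hj. unfold refines in Hj. lia.
Qed.

Lemma approx_agree i j : i <= j -> agree (radius i) (approx i) (approx j).
Proof.
  induction 1 as [|j Hij IH]; [apply agree_refl|]. apply (agree_trans _ _ (approx j)); [assumption|].
  apply (agree_le _ (radius j)); [now apply radius_mono | apply (proj2 (stage_refines j))].
Qed.

Definition limit : table := fun x y => approx (S (max x y)) x y.

Lemma limit_agree j : agree (radius j) (approx j) limit.
Proof.
  intros x y Hx Hy. unfold limit. destruct (le_lt_dec (S (max x y)) j) as [Hle | Hlt].
  - symmetry. apply (approx_agree _ _ Hle); pose proof (radius_ge (S (max x y))); lia.
  - now apply (approx_agree j _ (Nat.lt_le_incl _ _ Hlt)).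
Qed.

Lemma limit_at j x y : x < radius j -> y < radius j -> limit x y = approx j x y.
Proof. intros Hx Hy. symmetry. now apply limit_agree. Qed.

Lemma limit_group : Gspace limit.
Proof.
  split; [|split].
  - intros x y z.
    assert (Hj : exists j, x + y + z + limit x y + limit y z < radius j)
      by (exists (S (x + y + z + limit x y + limit y z)); apply radius_ge).
    destruct Hj as [j Hj]. destruct (stage_refines j) as [[Hassoc _] _].
    rewrite (limit_at j x y), (limit_at j y z) in Hj |- * by lia.
    rewrite (limit_at j (approx j x y) z), (limit_at j x (approx j y z)) by lia.
    apply Hassoc.
  - intro x. pose proof (radius_ge (S x)). destruct (stage_refines (S x)) as [[_ [Hid _]] _].
    rewrite !(limit_at (S x)) by lia. apply Hid.
  - intro x. destruct (stage_refines x) as [_ [_ [_ [_ [_ [y [Hy [Hx [Hxy Hyx]]]]]]]]].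
    exists y. now rewrite !(limit_at (S x)).
Qed.

Lemma limit_avoids k : ~ N k limit.
Proof.
  apply (proj2 (stage_refines k)). split; [apply limit_group | apply limit_agree].
Qed.

End Baire.

Lemma nbhd_not_meager A n : Gspace A -> ~ rel_meager (nbhd A n).
Proof.
  intros GA [N [HN Hcov]].
  assert (HNd : forall k, nowhere_dense (N k)) by (intro k; now apply rel_nowhere_dense_iff).
  destruct (functional_choice (fun (p : nat * (table * nat)) s' =>
      Gspace (fst (snd p)) -> refines N (fst p) (fst (snd p)) (snd (snd p)) (fst s') (snd s')))
    as [next Hnext].
  { intros [k [B m]]. destruct (classic (Gspace B)) as [GB | nGB].
    - destruct (refines_exists N HNd k B m GB) as [B' [m' Hs']]. now exists (B', m').
    - exists (B, m). simpl. tauto. }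
  pose (step k s := next (k, s)).
  pose proof (fun k s => Hnext (k, s) : Gspace (fst s) ->
    refines N k (fst s) (snd s) (fst (step k s)) (snd (step k s))) as Hstep.
  pose proof (limit_group N step Hstep A n GA) as GL.
  destruct (Hcov _ GL) as [k Hk].
  - split; [assumption | apply (limit_agree N step Hstep A n GA 0)].
  - exact (limit_avoids N step Hstep A n GA k Hk).
Qed.

(** * Banach's category theorem *)

Fixpoint seq_code (l : nat) (f : nat -> nat) : nat :=
  match l with 0 => 0 | S l => to_nat (f 0, seq_code l (fun i => f (S i))) end.

Fixpoint seq_decode (l c : nat) : nat -> nat :=
  match l with
  | 0 => fun _ => 0
  | S l => fun i => match i with 0 => fst (of_nat c) | S i => seq_decode l (snd (of_nat c)) i end
  end.

Lemma seq_decode_code l : forall f i, i < l -> seq_decode l (seq_code l f) i = f i.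
Proof.
  induction l as [|l IH]; intros f i Hi; [lia|].
  destruct i as [|i]; cbn [seq_code seq_decode]; rewrite cancel_of_to; [reflexivity|].
  apply (IH (fun i => f (S i))). lia.
Qed.

Definition square_code (k : nat) (B : table) : nat := seq_code k (fun i => seq_code k (B i)).

Definition square_decode (k c : nat) : table := fun i j => seq_decode k (seq_decode k c i) j.

Lemma square_decode_code k B : agree k (square_decode k (square_code k B)) B.
Proof. intros i j Hi Hj. unfold square_decode, square_code. now rewrite !seq_decode_code. Qed.

Definition coded_nbhd (c : nat) : table -> Prop :=
  nbhd (square_decode (fst (of_nat c)) (snd (of_nat c))) (fst (of_nat c)).

Lemma nbhd_coded B k : exists c, forall C, coded_nbhd c C <-> nbhd B k C.
Proof.
  exists (to_nat (k, square_code k B)). intro C. unfold coded_nbhd. rewrite cancel_of_to. simpl.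
  pose proof (square_decode_code k B) as Hcode.
  split; intros [GC HC]; split; try assumption.
  - exact (agree_trans _ _ _ _ (agree_sym _ _ _ Hcode) HC).
  - exact (agree_trans _ _ _ _ Hcode HC).
Qed.

Lemma meager_of_locally_meager Y :
  (forall A n, Gspace A -> exists B m, Gspace B /\ subset (nbhd B m) (nbhd A n) /\
     rel_meager (fun C => Y C /\ nbhd B m C)) ->
  rel_meager Y.
Proof.
  intro Hloc. set (small c := rel_meager (fun C => Y C /\ coded_nbhd c C)).
  apply (meager_sub _ (fun C => (exists c, small c /\ Y C /\ coded_nbhd c C) \/
                                ~ exists c, small c /\ coded_nbhd c C)).
  { intros C _ YC. destruct (classic (exists c, small c /\ coded_nbhd c C)) as [[c [Hc Cc]] | Hno].
    - left. now exists c.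
    - now right. }
  apply meager_union.
  - apply meager_bigcup. intro c. destruct (classic (small c)) as [Hc | Hc].
    + apply (meager_sub _ _ (fun C _ H => proj2 H) Hc).
    + apply meager_empty. now intros C _ [Hc' _].
  - apply meager_of_nowhere_dense. intros A n GA. destruct (Hloc A n GA) as [B [m [GB [Hsub HM]]]].
    exists B, m. split; [assumption|]. split; [assumption|].
    intros C HC Hno. apply Hno. destruct (nbhd_coded B m) as [c Hc]. exists c. split.
    + apply (meager_sub _ _ (fun D _ HD => conj (proj1 HD) (proj1 (Hc D) (proj2 HD))) HM).
    + now apply Hc.
Qed.

Lemma meager_in_nbhd Y A0 n0 :
  (forall A n, Gspace A -> subset (nbhd A n) (nbhd A0 n0) -> exists B m, Gspace B /\
     subset (nbhd B m) (nbhd A n) /\ rel_meager (fun C => Y C /\ nbhd B m C)) ->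
  rel_meager (fun C => Y C /\ nbhd A0 n0 C).
Proof.
  intro Hloc. apply meager_of_locally_meager. intros A n GA.
  destruct (nbhd_inside_or_disjoint A0 n0 A n) as [Hin | Hout].
  - destruct (Hloc A (max n n0) GA Hin) as [B [m [GB [Hsub HM]]]].
    exists B, m. split; [assumption|]. split.
    + intros C HC. apply (nbhd_sub A n A (max n n0)); [lia | apply agree_refl | now apply Hsub].
    + apply (meager_sub _ _ (fun C _ HC => conj (proj1 (proj1 HC)) (proj2 HC)) HM).
  - exists A, (max n n0). split; [assumption|]. split; [apply nbhd_sub; [lia | apply agree_refl]|].
    apply meager_empty. intros C _ [[_ HC0] HC]. exact (Hout C HC HC0).
Qed.

(** * Definable sets have the Baire property *)

Definition baire_property (X : table -> Prop) : Prop :=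
  forall A n, Gspace A -> exists B m, Gspace B /\ subset (nbhd B m) (nbhd A n) /\
    (rel_meager (fun C => X C /\ nbhd B m C) \/ rel_meager (fun C => ~ X C /\ nbhd B m C)).

Lemma baire_property_ext X Y :
  (forall C, Gspace C -> (X C <-> Y C)) -> baire_property X -> baire_property Y.
Proof.
  intros HXY HX A n GA. destruct (HX A n GA) as [B [m [GB [Hsub HM]]]].
  exists B, m. split; [assumption|]. split; [assumption|].
  destruct HM as [HM | HM]; [left | right]; refine (meager_sub _ _ _ HM);
    intros C GC [HC BC]; (split; [|assumption]); rewrite (HXY C GC) in *; assumption.
Qed.

Lemma baire_property_not X : baire_property X -> baire_property (fun C => ~ X C).
Proof.
  intros HX A n GA. destruct (HX A n GA) as [B [m [GB [Hsub HM]]]].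
  exists B, m. split; [assumption|]. split; [assumption|].
  destruct HM as [HM | HM]; [right | left]; [|assumption].
  apply (meager_sub _ _ (fun C _ HC => conj (NNPP _ (proj1 HC)) (proj2 HC)) HM).
Qed.

Lemma baire_property_and X Y :
  baire_property X -> baire_property Y -> baire_property (fun C => X C /\ Y C).
Proof.
  intros HX HY A n GA. destruct (HX A n GA) as [B [m [GB [Hsub HMX]]]].
  destruct (HY B m GB) as [B' [m' [GB' [Hsub' HMY]]]].
  exists B', m'. split; [assumption|]. split; [intros C HC; now apply Hsub, Hsub'|].
  destruct HMX as [HMX | HMX].
  - left. refine (meager_sub _ _ _ HMX).
    intros C _ [[XC _] HC]. split; [assumption | now apply Hsub'].
  - destruct HMY as [HMY | HMY].
    + left. refine (meager_sub _ _ _ HMY). intros C _ [[_ YC] HC]. now split.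
    + right. refine (meager_sub _ _ _ (meager_union _ _ HMX HMY)).
      intros C _ [HXY HC]. destruct (classic (X C)) as [XC | XC].
      * right. split; [tauto | assumption].
      * left. split; [assumption | now apply Hsub'].
Qed.

Lemma baire_property_ex (X : nat -> table -> Prop) :
  (forall v, baire_property (X v)) -> baire_property (fun C => exists v, X v C).
Proof.
  intros HX A n GA.
  destruct (classic (exists v B m, Gspace B /\ subset (nbhd B m) (nbhd A n) /\
              rel_meager (fun C => ~ X v C /\ nbhd B m C))) as [[v [B [m [GB [Hsub HM]]]]] | Hno].
  - exists B, m. split; [assumption|]. split; [assumption|]. right.
    refine (meager_sub _ _ _ HM). intros C _ [HC BC]. split; [|assumption]. eauto.
  - exists A, n. split; [assumption|]. split; [now intros C|]. left.
    apply (meager_sub _ (fun C => exists v, X v C /\ nbhd A n C)); [intros C _ [[v XC] HC]; eauto|].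
    apply meager_bigcup. intro v. apply meager_in_nbhd. intros A' n' GA' Hsub.
    destruct (HX v A' n' GA') as [B [m [GB [Hsub' [HM | HM]]]]].
    + now exists B, m.
    + exfalso. apply Hno. exists v, B, m. split; [assumption|]. split; [|assumption].
      intros C HC. now apply Hsub, Hsub'.
Qed.

Lemma baire_property_locally_constant X :
  (forall A, Gspace A -> exists m, forall C, nbhd A m C -> (X C <-> X A)) -> baire_property X.
Proof.
  intros Hloc A n GA. destruct (Hloc A GA) as [m Hm].
  exists A, (max n m). split; [assumption|]. split; [apply nbhd_sub; [lia | apply agree_refl]|].
  assert (Hsub : subset (nbhd A (max n m)) (nbhd A m)) by (apply nbhd_sub; [lia | apply agree_refl]).
  destruct (classic (X A)) as [XA | XA]; [right | left]; apply meager_empty;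
    intros C GC [HC BC]; rewrite (Hm C (Hsub C BC)) in HC; tauto.
Qed.

Lemma eval_local A e t : exists m, forall C, agree m A C -> eval C e t = eval A e t.
Proof.
  induction t as [v | | a [ma Ha] b [mb Hb]]; [now exists 0 | now exists 0|].
  exists (max (max ma mb) (S (max (eval A e a) (eval A e b)))). intros C HC. simpl.
  rewrite Ha, Hb by (eapply agree_le; [|exact HC]; lia).
  symmetry. apply HC; lia.
Qed.

Lemma baire_property_sat f : forall e, baire_property (fun C => sat C e f).
Proof.
  induction f as [t s | | g IH | g IHg h IHh | g IHg h IHh | g IHg h IHh | x g IH | x g IH];
    intro e; simpl.
  - apply baire_property_locally_constant. intros A GA.
    destruct (eval_local A e t) as [mt Ht], (eval_local A e s) as [ms Hs].
    exists (max mt ms). intros C [_ HC].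
    rewrite Ht, Hs by (eapply agree_le; [|exact HC]; lia). reflexivity.
  - apply baire_property_locally_constant. intros A _. exists 0. tauto.
  - now apply baire_property_not.
  - now apply baire_property_and.
  - apply (baire_property_ext (fun C => ~ (~ sat C e g /\ ~ sat C e h))); [intros C _; tauto|].
    apply baire_property_not, baire_property_and; now apply baire_property_not.
  - apply (baire_property_ext (fun C => ~ (sat C e g /\ ~ sat C e h))); [intros C _; tauto|].
    apply baire_property_not, baire_property_and; [apply IHg | apply baire_property_not, IHh].
  - apply (baire_property_ext (fun C => ~ exists v, ~ sat C (upd e x v) g)).
    + intros C _. split; [intros H v; apply NNPP; eauto | intros H [v Hv]; apply Hv, H].
    + apply baire_property_not, baire_property_ex. intro v. apply baire_property_not, IH.
  - apply baire_property_ex. intro v. apply IH.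
Qed.

Lemma comeager_nbhd_of_not_meager X :
  baire_property X -> ~ rel_meager X ->
  exists B m, Gspace B /\ rel_meager (fun C => ~ X C /\ nbhd B m C).
Proof.
  intros HX HnM. apply NNPP; intro Hno. apply HnM, meager_of_locally_meager. intros A n GA.
  destruct (HX A n GA) as [B [m [GB [Hsub [HM | HM]]]]].
  - now exists B, m.
  - exfalso. apply Hno. now exists B, m.
Qed.

(** * Relabelings and direct products *)

Definition relabel (p p' : nat -> nat) (C : table) : table := fun x y => p (C (p' x) (p' y)).

Definition relabeling (p p' : nat -> nat) : Prop :=
  (forall x, p (p' x) = x) /\ (forall x, p' (p x) = x) /\ p 0 = 0.

Lemma relabeling_sym p p' : relabeling p p' -> relabeling p' p.
Proof. intros [Hpp' [Hp'p Hp0]]. repeat split; try assumption. now rewrite <- Hp0, Hp'p. Qed.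

Lemma relabel_group p p' C : relabeling p p' -> Gspace C -> Gspace (relabel p p' C).
Proof.
  intros Hp [Hassoc [Hid Hinv]]. destruct (relabeling_sym _ _ Hp) as [_ [_ Hp'0]].
  destruct Hp as [Hpp' [Hp'p Hp0]]. unfold relabel. split; [|split].
  - intros x y z. rewrite !Hp'p, Hassoc. reflexivity.
  - intro x. rewrite Hp'0, (proj1 (Hid _)), (proj2 (Hid _)), Hpp'. now split.
  - intro x. destruct (Hinv (p' x)) as [y [Hxy Hyx]]. exists (p y). now rewrite Hp'p, Hxy, Hyx.
Qed.

Lemma relabelK p p' C : (forall x, p (p' x) = x) -> relabel p p' (relabel p' p C) = C.
Proof.
  intro Hpp'. apply functional_extensionality; intro x; apply functional_extensionality; intro y.
  unfold relabel. now rewrite !Hpp'.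
Qed.

Lemma finite_bound (f : nat -> nat) n : exists b, forall i, i < n -> f i < b.
Proof.
  induction n as [|n [b Hb]]; [exists 0; lia|].
  exists (max b (S (f n))). intros i Hi. destruct (Nat.eq_dec i n) as [-> | Hne]; [lia|].
  specialize (Hb i ltac:(lia)). lia.
Qed.

Lemma relabel_continuous p p' n :
  exists m, forall C C', agree m C C' -> agree n (relabel p p' C) (relabel p p' C').
Proof.
  destruct (finite_bound p' n) as [m Hm]. exists m.
  intros C C' HC x y Hx Hy. unfold relabel. f_equal. apply HC; now apply Hm.
Qed.

Lemma eval_relabel p p' C e e' t :
  relabeling p p' -> (forall v, e' v = p (e v)) ->
  eval (relabel p p' C) e' t = p (eval C e t).
Proof.
  intros [_ [Hp'p Hp0]] He. induction t as [v | | a IHa b IHb]; simpl; [apply He | now rewrite Hp0 |].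
  rewrite IHa, IHb. unfold relabel. now rewrite !Hp'p.
Qed.

Lemma upd_relabel p e e' x v :
  (forall w, e' w = p (e w)) -> forall w, upd e' x (p v) w = p (upd e x v w).
Proof. intros He w. unfold upd. now destruct (w =? x). Qed.

Lemma sat_relabel p p' C f : forall e e',
  relabeling p p' -> (forall v, e' v = p (e v)) ->
  (sat (relabel p p' C) e' f <-> sat C e f).
Proof.
  induction f as [t s | | g IH | g IHg h IHh | g IHg h IHh | g IHg h IHh | x g IH | x g IH];
    intros e e' Hp He; simpl.
  - rewrite !(eval_relabel p p' C e e') by assumption. destruct Hp as [_ [Hp'p _]].
    split; [|congruence]. intro E. now rewrite <- (Hp'p (eval C e t)), E, Hp'p.
  - tauto.
  - now rewrite (IH e e').
  - now rewrite (IHg e e'), (IHh e e').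
  - now rewrite (IHg e e'), (IHh e e').
  - now rewrite (IHg e e'), (IHh e e').
  - split; intros H v.
    + apply (IH _ _ Hp (upd_relabel p e e' x v He)), H.
    + rewrite <- (proj1 Hp v). apply (IH _ _ Hp (upd_relabel p e e' x _ He)), H.
  - split; intros [v Hv].
    + exists (p' v). rewrite <- (proj1 Hp v) in Hv. apply (IH _ _ Hp (upd_relabel p e e' x _ He)), Hv.
    + exists (p v). apply (IH _ _ Hp (upd_relabel p e e' x v He)), Hv.
Qed.

Lemma nowhere_dense_relabel p p' N :
  relabeling p p' -> nowhere_dense N -> nowhere_dense (fun C => N (relabel p p' C)).
Proof.
  intros Hp HN A n GA. pose proof (relabeling_sym _ _ Hp) as Hp'.
  destruct (relabel_continuous p' p n) as [n' Hn'].
  destruct (HN (relabel p p' A) n' (relabel_group _ _ _ Hp GA)) as [E [r [GE [Hsub Havoid]]]].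
  destruct (relabel_continuous p p' r) as [r' Hr'].
  exists (relabel p' p E), r'. split; [now apply relabel_group|]. split.
  - intros C [GC HC]. split; [assumption|].
    specialize (Hr' _ _ HC). rewrite relabelK in Hr' by apply Hp.
    destruct (Hsub (relabel p p' C)) as [_ HC']; [split; [now apply relabel_group | assumption]|].
    specialize (Hn' _ _ HC'). now rewrite !relabelK in Hn' by apply Hp'.
  - intros C [GC HC]. apply Havoid. split; [now apply relabel_group|].
    specialize (Hr' _ _ HC). now rewrite relabelK in Hr' by apply Hp.
Qed.

Lemma meager_relabel p p' Y :
  relabeling p p' -> rel_meager Y -> rel_meager (fun C => Y (relabel p p' C)).
Proof.
  intros Hp [N [HN Hcov]]. exists (fun k C => N k (relabel p p' C)). split.
  - intro k. apply rel_nowhere_dense_iff, nowhere_dense_relabel, rel_nowhere_dense_iff; auto.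
  - intros C GC YC. apply Hcov; [now apply relabel_group | assumption].
Qed.

Definition prod_table (T1 T2 : table) (h : nat -> nat * nat) (q : nat * nat -> nat) : table :=
  fun x y => q (T1 (fst (h x)) (fst (h y)), T2 (snd (h x)) (snd (h y))).

Lemma prod_group T1 T2 h q :
  (forall u, h (q u) = u) -> (forall x, q (h x) = x) -> h 0 = (0, 0) ->
  Gspace T1 -> Gspace T2 -> Gspace (prod_table T1 T2 h q).
Proof.
  intros Hhq Hqh Hh0 [Hassoc1 [Hid1 Hinv1]] [Hassoc2 [Hid2 Hinv2]].
  unfold prod_table. split; [|split].
  - intros x y z. rewrite !Hhq. simpl. now rewrite Hassoc1, Hassoc2.
  - intro x. rewrite Hh0. simpl.
    rewrite (proj1 (Hid1 _)), (proj1 (Hid2 _)), (proj2 (Hid1 _)), (proj2 (Hid2 _)).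
    now rewrite <- surjective_pairing.
  - intro x. destruct (Hinv1 (fst (h x))) as [a [Ha1 Ha2]], (Hinv2 (snd (h x))) as [b [Hb1 Hb2]].
    exists (q (a, b)). rewrite !Hhq. simpl. rewrite Ha1, Ha2, Hb1, Hb2, <- Hh0, Hqh. now split.
Qed.

Lemma relabel_prod T1 T2 h q g r :
  (forall u, h (q u) = u) ->
  relabel (fun x => r (h x)) (fun x => q (g x)) (prod_table T1 T2 h q) = prod_table T1 T2 g r.
Proof.
  intro Hhq. apply functional_extensionality; intro x; apply functional_extensionality; intro y.
  unfold relabel, prod_table. now rewrite !Hhq.
Qed.

(* Sends [(0, i)] to [i] for [i < m]; everything else goes through Cantor's pairing
   shifted past [m]. *)
Definition pair_code (m : nat) (u : nat * nat) : nat :=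
  let (a, j) := u in
  if a =? 0 then (if j <? m then j else m + to_nat (0, j - m)) else m + to_nat (a, j).

Definition unpair_code (m i : nat) : nat * nat :=
  if i <? m then (0, i) else
  let (a, j) := of_nat (i - m) in if a =? 0 then (0, j + m) else (a, j).

Lemma unpair_code_small m i : i < m -> unpair_code m i = (0, i).
Proof. intro Hi. unfold unpair_code. now rewrite (proj2 (Nat.ltb_lt _ _) Hi). Qed.

Lemma pair_code_small m j : j < m -> pair_code m (0, j) = j.
Proof. intro Hj. unfold pair_code. simpl. now rewrite (proj2 (Nat.ltb_lt _ _) Hj). Qed.

Lemma pair_codeK m u : unpair_code m (pair_code m u) = u.
Proof.
  destruct u as [a j]. unfold pair_code, unpair_code. destruct (a =? 0) eqn:Ea.
  - apply Nat.eqb_eq in Ea as ->. destruct (j <? m) eqn:Ej; [now rewrite Ej|].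
    apply Nat.ltb_ge in Ej.
    replace (m + to_nat (0, j - m) <? m) with false by (symmetry; apply Nat.ltb_ge; lia).
    replace (m + to_nat (0, j - m) - m) with (to_nat (0, j - m)) by lia.
    rewrite cancel_of_to. simpl. f_equal. lia.
  - replace (m + to_nat (a, j) <? m) with false by (symmetry; apply Nat.ltb_ge; lia).
    replace (m + to_nat (a, j) - m) with (to_nat (a, j)) by lia. now rewrite cancel_of_to, Ea.
Qed.

Lemma unpair_codeK m i : pair_code m (unpair_code m i) = i.
Proof.
  destruct (Nat.lt_ge_cases i m) as [Hi | Hi]; [now rewrite unpair_code_small, pair_code_small|].
  unfold unpair_code. rewrite (proj2 (Nat.ltb_ge _ _) Hi). destruct (of_nat (i - m)) as [a j] eqn:Eo.
  assert (Et : to_nat (a, j) = i - m) by (rewrite <- Eo; apply cancel_to_of).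
  destruct (a =? 0) eqn:Ea; unfold pair_code; [|rewrite Ea; lia].
  apply Nat.eqb_eq in Ea as ->. cbn -[to_nat Nat.ltb].
  replace (j + m <? m) with false by (symmetry; apply Nat.ltb_ge; lia).
  replace (j + m - m) with j by lia. lia.
Qed.

Lemma table_bound (T : table) k : exists b, forall i j, i < k -> j < k -> T i j < b.
Proof.
  induction k as [|k [b Hb]]; [exists 0; lia|].
  destruct (finite_bound (T k) (S k)) as [brow Hrow],
    (finite_bound (fun i => T i k) (S k)) as [bcol Hcol].
  exists (max b (max brow bcol)). intros i j Hi Hj.
  destruct (Nat.eq_dec i k) as [-> | Hik]; [specialize (Hrow j Hj); lia|].
  destruct (Nat.eq_dec j k) as [-> | Hjk]; [specialize (Hcol i Hi); simpl in Hcol; lia|].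
  specialize (Hb i j ltac:(lia) ltac:(lia)). lia.
Qed.

(* [D] is the direct product [B x B'], coded so that [B'] sits on [{1} x B'] over the window
   of [B'], while the relabeling makes [B x {1}] sit over the window of [B]. *)
Lemma nbhds_meet_up_to_relabeling B m B' m' : Gspace B -> Gspace B' ->
  exists p p' D, relabeling p p' /\ Gspace D /\ agree m' B' D /\ agree m B (relabel p p' D).
Proof.
  intros GB GB'.
  destruct (table_bound B m) as [b Hb], (table_bound B' m') as [b' Hb'].
  set (M := S (m + b)). set (M' := S (m' + b')).
  set (g := fun i => (snd (unpair_code M i), fst (unpair_code M i))).
  set (r := fun u : nat * nat => pair_code M (snd u, fst u)).
  assert (Hgr : forall u, g (r u) = u) by (intros [x y]; unfold g, r; now rewrite pair_codeK).
  assert (Hrg : forall i, r (g i) = i)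
    by (intro i; unfold g, r; cbn [fst snd]; now rewrite <- surjective_pairing, unpair_codeK).
  assert (B00 : B 0 0 = 0) by apply (proj2 GB).
  assert (B'00 : B' 0 0 = 0) by apply (proj2 GB').
  exists (fun x => r (unpair_code M' x)), (fun x => pair_code M' (g x)),
    (prod_table B B' (unpair_code M') (pair_code M')).
  split; [|split; [|split]].
  - split; [|split].
    + intro x. now rewrite pair_codeK.
    + intro x. now rewrite Hgr, unpair_codeK.
    + rewrite unpair_code_small by lia. apply pair_code_small. lia.
  - apply prod_group; auto using pair_codeK, unpair_codeK.
  - intros i j Hi Hj. unfold prod_table. rewrite !unpair_code_small by lia. simpl.
    rewrite B00. symmetry. apply pair_code_small. specialize (Hb' i j Hi Hj). lia.
  - intros i j Hi Hj. rewrite relabel_prod by apply pair_codeK. unfold prod_table, g, r.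
    rewrite !unpair_code_small by lia. simpl. rewrite B'00. symmetry. apply pair_code_small.
    specialize (Hb i j Hi Hj). lia.
Qed.

(** * The zero-one law *)

Definition holds (f : formula) (C : table) : Prop := sat C (fun _ => 0) f.

Lemma holds_relabel p p' f C : relabeling p p' -> (holds f (relabel p p' C) <-> holds f C).
Proof. intro Hp. apply sat_relabel; [assumption|]. intro v. symmetry. apply Hp. Qed.

(* If [f] and its negation were both non-meager, each would be comeager in a neighbourhood;
   a relabeling carries a neighbourhood of a point of one into the other, so the two meager
   exceptional sets would cover a whole neighbourhood of that point. *)
Lemma zero_one_law f : rel_meager (holds f) \/ rel_meager (fun C => ~ holds f C).
Proof.
  apply NNPP; intro Hno. apply not_or_and in Hno as [Hpos Hneg].
  destruct (comeager_nbhd_of_not_meager _ (baire_property_sat f _) Hpos) as [B [m [GB HB]]].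
  destruct (comeager_nbhd_of_not_meager _ (baire_property_not _ (baire_property_sat f _)) Hneg)
    as [B' [m' [GB' HB']]].
  destruct (nbhds_meet_up_to_relabeling B m B' m' GB GB') as [p [p' [D [Hp [GD [HD' HD]]]]]].
  destruct (relabel_continuous p p' m) as [k Hk].
  apply (nbhd_not_meager D (max k m') GD).
  apply (meager_sub _ (fun C => (~ ~ holds f C /\ nbhd B' m' C) \/
                                (~ holds f (relabel p p' C) /\ nbhd B m (relabel p p' C)))).
  - intros C GC [_ HC]. destruct (classic (holds f C)) as [Hf | Hf].
    + left. split; [tauto|]. split; [assumption|].
      apply (agree_trans _ _ D); [assumption | eapply agree_le; [|exact HC]; lia].
    + right. split; [now rewrite holds_relabel|]. split; [now apply relabel_group|].
      apply (agree_trans _ _ (relabel p p' D)); [assumption|].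
      apply Hk. eapply agree_le; [|exact HC]; lia.
  - apply meager_union; [assumption|].
    now apply (meager_relabel p p' (fun C => ~ holds f C /\ nbhd B m C)).
Qed.

Fixpoint term_code (t : term) : nat :=
  match t with
  | TVar n => to_nat (0, n)
  | TOne => to_nat (1, 0)
  | TMul a b => to_nat (2, to_nat (term_code a, term_code b))
  end.

Fixpoint formula_code (f : formula) : nat :=
  match f with
  | FEq a b => to_nat (0, to_nat (term_code a, term_code b))
  | FFalse => to_nat (1, 0)
  | FNot g => to_nat (2, formula_code g)
  | FAnd g h => to_nat (3, to_nat (formula_code g, formula_code h))
  | FOr g h => to_nat (4, to_nat (formula_code g, formula_code h))
  | FImp g h => to_nat (5, to_nat (formula_code g, formula_code h))
  | FAll n g => to_nat (6, to_nat (n, formula_code g))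
  | FEx n g => to_nat (7, to_nat (n, formula_code g))
  end.

Lemma to_nat_inj p q : to_nat p = to_nat q -> p = q.
Proof. intro H. now rewrite <- (cancel_of_to p), <- (cancel_of_to q), H. Qed.

Ltac decode_pairs :=
  repeat match goal with
  | H : to_nat _ = to_nat _ |- _ => apply to_nat_inj in H
  | H : (_, _) = (_, _) |- _ => apply pair_equal_spec in H as [? ?]
  | H : _ = _ |- _ => discriminate H
  end.

Lemma term_code_inj t s : term_code t = term_code s -> t = s.
Proof.
  revert s. induction t; destruct s; cbn [term_code]; intro H; decode_pairs; subst; f_equal; auto.
Qed.

Lemma formula_code_inj f g : formula_code f = formula_code g -> f = g.
Proof.
  revert g. induction f; destruct g; cbn [formula_code]; intro H; decode_pairs; subst; f_equal;
    auto using term_code_inj.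
Qed.

Definition generic (f : formula) : Prop := rel_meager (fun C => ~ holds f C).

Lemma generic_or_generic_not f : generic f \/ generic (FNot f).
Proof.
  destruct (zero_one_law f) as [Hmeager | Hgen]; [right | now left].
  refine (meager_sub _ _ _ Hmeager). intros C _ HC. exact (NNPP _ HC).
Qed.

Definition generic_model (H : table) : Prop :=
  Gspace H /\ forall f, sentence f -> generic f -> holds f H.

Lemma generic_model_comeager : comeager_in_G generic_model.
Proof.
  split; [now intros A [GA _]|].
  apply (meager_sub _ (fun C => exists f, sentence f /\ generic f /\ ~ holds f C)).
  - intros C GC [_ HC]. apply NNPP; intro Hno. apply HC. split; [assumption|].
    intros f Hf Hgen. apply NNPP; intro Hnf. apply Hno. now exists f.
  - apply (meager_bigcup_inj formula_code _ formula_code_inj). intro f.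
    destruct (classic (generic f)) as [Hgen | Hgen].
    + refine (meager_sub _ _ _ Hgen). now intros C _ [_ [_ HC]].
    + apply meager_empty. now intros C _ [_ [Hgen' _]].
Qed.

Lemma generic_model_elem_equiv G H :
  generic_model G -> Gspace H -> (elem_equiv G H <-> generic_model H).
Proof.
  intros [_ SG] GH. split.
  - intro Heq. split; [assumption|]. intros f Hf Hgen. apply (Heq f Hf), SG; assumption.
  - intros [_ SH] f Hf. unfold holds in *.
    destruct (generic_or_generic_not f) as [Hgen | Hgen].
    + pose proof (SG f Hf Hgen). pose proof (SH f Hf Hgen). tauto.
    + pose proof (SG (FNot f) Hf Hgen). pose proof (SH (FNot f) Hf Hgen). simpl in *. tauto.
Qed.

Theorem corollary5p9 :
  exists S : table -> Prop,
    comeager_in_G S /\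
    (forall G H : table, S G -> Gspace H -> (elem_equiv G H <-> S H)).
Proof.
  exists generic_model. split.
  - exact generic_model_comeager.
  - exact generic_model_elem_equiv.
Qed.
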